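(* Let $F$ be a Ferrers diagram, let $(x,y)\in F$, and let $D$ be an effective divisor on $R(F)$. If \[ \deg(D) < \min\{\, \vert U(x,y)\vert - y,\ \vert L(x,y)\vert - x \,\}, \] then $D$ does not have positive rank.
   Context: $\mathbb{N}=\{1,2,3,\dots\}$. A Ferrers diagram is a finite subset $F\subset\mathbb{N}^2$ such that whenever $(x,y)\in F$, either $x=1$ or $(x-1,y)\in F$, and either $y=1$ or $(x,y-1)\in F$; $x$ is the column index and $y$ the row index. The Ferrers rook graph $R(F)$ is the simple graph with vertex set $F$ in which distinct $(x,y),(x',y')$ are adjacent iff $x=x'$ or $y=y'$. For $(x,y)\in F$: $L(x,y)=\{(x',y')\in F : x'\le x\}$ and $U(x,y)=\{(x',y')\in F : y'\le y\}$. Divisors on a graph: functions $D:V\to\mathbb{Z}$, degree $\sum_v D(v)$, effective if all values are $\ge0$; firing a vertex $v$ means $v$ loses $\deg(v)$ chips and each neighbor gains one; divisors are equivalent if related by a sequence of firings; $\vert D\vert$ is the set of effective divisors equivalent to $D$; $D$ has positive rank if for every vertex $v$ some $D'\in\vert D\vert$ has $D'(v)>0$. *)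

From HB Require Import structures.
From mathcomp Require Import all_boot all_order all_algebra.
From mathcomp Require Import finmap.
From Stdlib Require Import Relations.Relation_Operators.
Set Implicit Arguments. Unset Strict Implicit. Unset Printing Implicit Defensive.
Import Order.TTheory GRing.Theory Num.Theory.
Local Open Scope fset_scope.

(* A Ferrers diagram: a finite subset of N^2 (N = {1,2,...}), given as a finite
   set of pairs (x,y) = (column, row), closed downwards in each coordinate. *)
Definition ferrers (F : {fset (nat * nat)}) : Prop :=
  forall p, p \in F ->
    [/\ (1 <= p.1)%N, (1 <= p.2)%N,
        p.1 = 1%N \/ (p.1.-1, p.2) \in F &
        p.2 = 1%N \/ (p.1, p.2.-1) \in F].

Definition rook_adj (F : {fset (nat * nat)}) (u v : F) : bool :=
  (u != v) && (((val u).1 == (val v).1) || ((val u).2 == (val v).2)).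

Definition vdeg (F : {fset (nat * nat)}) (v : F) : nat :=
  #|[set u : F | rook_adj u v]|.

Definition divisor (F : {fset (nat * nat)}) := {ffun F -> int}.

Definition ddeg (F : {fset (nat * nat)}) (D : divisor F) : int :=
  (\sum_(v : F) D v)%R.

Definition effective (F : {fset (nat * nat)}) (D : divisor F) : Prop :=
  forall v : F, (0 <= D v)%R.

Definition fire (F : {fset (nat * nat)}) (v : F) (D : divisor F) : divisor F :=
  [ffun u => if u == v then (D u - (vdeg v)%:Z)%R
             else if rook_adj u v then (D u + 1)%R else D u].

Definition fires (F : {fset (nat * nat)}) (D D' : divisor F) : Prop :=
  exists v : F, D' = fire v D.

Definition div_equiv (F : {fset (nat * nat)}) : divisor F -> divisor F -> Prop :=
  clos_refl_sym_trans (divisor F) (@fires F).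

Definition positive_rank (F : {fset (nat * nat)}) (D : divisor F) : Prop :=
  forall v : F, exists D' : divisor F,
    [/\ div_equiv D D', effective D' & (0 < D' v)%R].

Definition Lset (F : {fset (nat * nat)}) (x : nat) : {fset (nat * nat)} :=
  [fset p in F | (p.1 <= x)%N].
Definition Uset (F : {fset (nat * nat)}) (y : nat) : {fset (nat * nat)} :=
  [fset p in F | (p.2 <= y)%N].

(* Every divisor of |D| is D - Lg for an integer firing script g, L the Laplacian
   of R(F).  Call a column c <= x light for T when it carries fewer than
   |col c| - 1 chips; since deg D < |L(x,y)| - x, every T in |D| has a light
   column, and a chip-free vertex in it.  If K is a clique carrying fewer than
   |K| - 1 chips of T and T - Lg is effective, then g is constant on K as soon as
   it attains its global maximum there: if a >= 1 vertices of K are maximal and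
   b >= 1 are not, each maximal one loses at least b chips, and ab >= a + b - 1.
   Given T0 and E = T0 - Lf in |D|, let tau be the largest minimum of f on a
   column c <= x and T = T0 - L max(f, tau).  Then T0 = T + L max(f, tau) and
   E = T - L min(f, tau), and on every light column of T we get f = tau, so both
   scripts are maximal there: otherwise f >= tau on some column and f < tau on
   another, and the clique argument on the rows r <= y yields
   deg D >= |U(x,y)| - y.  Iterating over all vertices v gives one T in |D| that
   reaches, for every v, some E_v in |D| with E_v(v) > 0 by a script maximal on
   the light columns of T; no such script can put a chip on a chip-free vertex
   of a light column. *)

From HB Require Import structures.
From mathcomp Require Import all_boot all_order all_algebra.
From mathcomp Require Import finmap.
From mathcomp Require Import zify.
Import Order.TTheory GRing.Theory Num.Theory.
Local Open Scope fset_scope.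
Local Open Scope ring_scope.
Set Implicit Arguments. Unset Strict Implicit.

Section Laplacian.
Variable F : {fset (nat * nat)}.
Implicit Types (g : F -> int) (u v w : F).

Definition lap g w : int := \sum_(u | rook_adj u w) (g w - g u).

Lemma rook_adjC u v : rook_adj u v = rook_adj v u.
Proof. by rewrite /rook_adj eq_sym [((val v).1 == _)]eq_sym [((val v).2 == _)]eq_sym. Qed.

Lemma rook_adjxx u : rook_adj u u = false.
Proof. by rewrite /rook_adj eqxx. Qed.

Lemma eq_lap g1 g2 : g1 =1 g2 -> lap g1 =1 lap g2.
Proof. by move=> eq_g w; apply: eq_bigr => u _; rewrite !eq_g. Qed.

Lemma lapD g1 g2 w : lap (fun u => g1 u + g2 u) w = lap g1 w + lap g2 w.
Proof. by rewrite /lap -big_split; apply: eq_bigr => u _ /=; lia. Qed.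

Lemma lapN g w : lap (fun u => - g u) w = - lap g w.
Proof. by rewrite /lap -sumrN; apply: eq_bigr => u _; lia. Qed.

Lemma lap_cst (c : int) w : lap (fun=> c) w = 0.
Proof. by rewrite /lap big1 // => u _; rewrite subrr. Qed.

Lemma sum_lap g : \sum_w lap g w = 0.
Proof.
rewrite /lap; under eq_bigr do rewrite sumrB.
rewrite sumrB (exchange_big_dep xpredT) //=; apply/eqP; rewrite subr_eq0.
by apply/eqP/eq_bigr => u _; apply: eq_bigl => w; rewrite rook_adjC.
Qed.

Lemma lap_ge_card g w (S : {set F}) :
  (forall u, g u <= g w) -> {in S, forall u, rook_adj u w && (g u < g w)} ->
  #|S|%:Z <= lap g w.
Proof.
move=> g_max S_lt; rewrite /lap (bigID (mem S)) /=.
have -> : \sum_(u | rook_adj u w && (u \in S)) (g w - g u) = \sum_(u in S) (g w - g u).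
  apply: eq_bigl => u; case: (boolP (u \in S)) => [/S_lt/andP[-> _]|]; by rewrite ?andbF.
apply: ler_wpDr; first by apply: sumr_ge0 => u _; rewrite subr_ge0.
rewrite -natz -sumr_const.
by apply: ler_sum => u /S_lt/andP[_]; rewrite -subr_gt0; lia.
Qed.

Lemma lap_ge0 g w : (forall u, g u <= g w) -> 0 <= lap g w.
Proof. by move=> g_max; apply: sumr_ge0 => u _; rewrite subr_ge0. Qed.

Lemma lap_max_le g (t : int) w :
  lap (fun u => Num.max (g u) t) w <= Num.max 0 (lap g w).
Proof.
have [gw_le|gw_gt] := leP (g w) t.
  rewrite le_max; apply/orP; left; apply: sumr_le0 => u _.
  by rewrite (max_idPr gw_le) subr_le0 le_max lexx orbT.
rewrite le_max; apply/orP; right; apply: ler_sum => u _.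
by rewrite (max_idPl (ltW gw_gt)); apply: lerB => //; rewrite le_max lexx.
Qed.

Lemma fire_lap v (D : divisor F) w :
  fire v D w = D w - lap (fun u => (u == v)%:Z) w.
Proof.
rewrite /fire ffunE /lap; have [->|w_neq_v] := eqVneq w v.
  rewrite (eq_bigr (fun=> 1)) => [|u]; last first.
    by case: eqP => [->|]; rewrite ?rook_adjxx // subr0.
  by rewrite sumr_const /vdeg cardsE natz.
case: ifP => [vw|not_vw].
  rewrite (bigD1 v) 1?rook_adjC //= eqxx big1 ?addr0.
    by rewrite sub0r opprK.
  by move=> u /andP[_ /negPf->]; rewrite subrr.
rewrite big1 ?subr0 // => u.
by have [->|_] := eqVneq u v; rewrite ?subrr // rook_adjC not_vw.
Qed.

Lemma div_equiv_lap (D D' : divisor F) :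
  div_equiv D D' -> exists g, forall w, D' w = D w - lap g w.
Proof.
elim=> {D D'} [D _ [v ->]|D|D D' _ [g DD']|D1 D2 D3 _ [g1 D12] _ [g2 D23]].
- by exists (fun u => (u == v)%:Z) => w; apply: fire_lap.
- by exists (fun=> 0) => w; rewrite lap_cst subr0.
- by exists (fun u => - g u) => w; rewrite lapN DD' opprK subrK.
- by exists (fun u => g1 u + g2 u) => w; rewrite lapD D23 D12 opprD addrA.
Qed.

End Laplacian.

Section Lines.
Variable F : {fset (nat * nat)}.
Implicit Types (T E g : F -> int) (K : {set F}).

Definition clique K := {in K &, forall u w, u != w -> rook_adj u w}.

Definition light T K := \sum_(w in K) T w < #|K|%:Z - 1.

Lemma light_zero T K : (forall w, 0 <= T w) -> light T K -> exists2 w, w \in K & T w = 0.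
Proof.
move=> T_ge0 K_light.
have [/existsP[w /andP[wK /eqP]]|/existsPn no_zero] := boolP [exists w in K, T w == 0].
  by exists w.
move: K_light; rewrite /light ltNge => /negP[].
rewrite -natz -sumr_const lerBlDr.
apply: le_trans (ler_wpDr ler01 (lexx _)); apply: ler_sum => w wK.
by have := T_ge0 w; have := no_zero w; rewrite wK => /eqP ? ?; lia.
Qed.

Lemma clique_cut K T E g m :
  clique K -> (forall w, 0 <= T w) -> (forall w, 0 <= E w) ->
  (forall w, E w = T w - lap g w) -> (forall u, g u <= m) ->
  (exists2 u, u \in K & g u = m) -> (exists2 u, u \in K & g u < m) ->
  ~~ light T K.
Proof.
move=> K_clique T_ge0 E_ge0 E_T g_le [u0 u0K gu0] [u1 u1K gu1].
pose P := [set u | g u == m].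
have top_ge w : w \in K :&: P -> #|K :\: P|%:Z <= T w.
  rewrite !inE => /andP[wK /eqP gw].
  have := E_ge0 w; rewrite E_T; suff: #|K :\: P|%:Z <= lap g w by lia.
  apply: lap_ge_card => [u|u]; first by rewrite gw.
  rewrite !inE => /andP[gu uK]; rewrite gw lt_neqAle gu g_le !andbT.
  by apply: K_clique => //; apply: contraNneq gu => ->; rewrite gw.
have top_pos : (0 < #|K :&: P|)%N.
  by apply/card_gt0P; exists u0; rewrite !inE u0K gu0 eqxx.
have bot_pos : (0 < #|K :\: P|)%N.
  by apply/card_gt0P; exists u1; rewrite !inE u1K lt_eqF.
rewrite /light -leNgt -(cardsID P K) PoszD.
apply: le_trans (_ : \sum_(w in K :&: P) (#|K :\: P|%:Z) <= _).
  rewrite sumr_const -mulr_natr natz.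
  by move: #|K :&: P| #|K :\: P| top_pos bot_pos => a b a_gt0 b_gt0; nia.
apply: le_trans (_ : \sum_(w in K :&: P) T w <= _); first exact: ler_sum.
by rewrite [X in _ <= X](big_setID P) /= lerDl sumr_ge0.
Qed.

Lemma light_clique_max K T E g m :
  clique K -> (forall w, 0 <= T w) -> (forall w, 0 <= E w) ->
  (forall w, E w = T w - lap g w) -> (forall u, g u <= m) ->
  (exists2 u, u \in K & g u = m) -> light T K -> {in K, forall w, g w = m}.
Proof.
move=> K_clique T_ge0 E_ge0 E_T g_le top K_light w wK; apply/eqP.
apply: contraTT K_light => gw; apply: (clique_cut K_clique T_ge0 E_ge0 E_T g_le top).
by exists w; rewrite // lt_neqAle gw g_le.
Qed.

End Lines.

Section CoordinateLines.
Variables (F : {fset (nat * nat)}) (k : F -> nat).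
Hypothesis k_gt0 : forall w, (0 < k w)%N.

Lemma sum_coord_partition (phi : F -> int) n :
  \sum_(w | (k w <= n)%N) phi w = \sum_(1 <= c < n.+1) \sum_(w | k w == c) phi w.
Proof.
elim: n => [|n IH]; first by rewrite big_geq // big_pred0 // => w; rewrite leqNgt k_gt0.
rewrite big_nat_recr //= -IH (bigID (fun w => (k w <= n)%N)) /=.
congr (_ + _); apply: eq_bigl => w; first by rewrite andb_idl // => /leqW.
by rewrite -ltnNge eqn_leq.
Qed.

Lemma sum_coord_lines_ge T n :
  (forall w, 0 <= T w) ->
  (forall c, (0 < c <= n)%N -> ~~ light T [set w | k w == c]) ->
  #|[set w | (k w <= n)%N]|%:Z - n%:Z <= \sum_w T w.
Proof.
move=> T_ge0 lines_heavy.
have -> : #|[set w | (k w <= n)%N]|%:Z - n%:Z =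
          \sum_(1 <= c < n.+1) (#|[set w | k w == c]|%:Z - 1).
  rewrite sumrB sumr_const_nat subSS subn0 natz; congr (_ - _).
  rewrite -natz -sumr_const (eq_bigl (fun w => k w <= n)%N) => [|w]; last by rewrite inE.
  rewrite sum_coord_partition; apply: eq_bigr => c _.
  by rewrite -natz -sumr_const; apply: eq_bigl => w; rewrite inE.
apply: le_trans (_ : \sum_(1 <= c < n.+1) \sum_(w | k w == c) T w <= _).
  rewrite big_nat [X in _ <= X]big_nat; apply: ler_sum => c c_range.
  have := lines_heavy c c_range; rewrite /light -leNgt.
  by rewrite (eq_bigl (fun w => k w == c)) // => w; rewrite inE.
rewrite -sum_coord_partition [X in _ <= X](bigID (fun w => (k w <= n)%N)) /=.
by rewrite lerDl sumr_ge0.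
Qed.

End CoordinateLines.

Section Ferrers.
Variable F : {fset (nat * nat)}.
Hypothesis F_ferrers : ferrers F.

Lemma ferrers_coord_gt0 (w : F) : (0 < (val w).1)%N /\ (0 < (val w).2)%N.
Proof. by have [] := F_ferrers (fsvalP w). Qed.

Lemma ferrers_left a b a' : (a, b) \in F -> (0 < a' <= a)%N -> (a', b) \in F.
Proof.
elim: a => [|a IH] ab a'_range; first by lia.
have [->//|a'_ne] := eqVneq a' a.+1.
have [_ _ [/= a_eq0|ab'] _] := F_ferrers ab; first by lia.
by apply: IH ab' _; lia.
Qed.

Lemma ferrers_below a b b' : (a, b) \in F -> (0 < b' <= b)%N -> (a, b') \in F.
Proof.
elim: b => [|b IH] ab b'_range; first by lia.
have [->//|b'_ne] := eqVneq b' b.+1.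
have [_ _ _ [/= b_eq0|ab']] := F_ferrers ab; first by lia.
by apply: IH ab' _; lia.
Qed.

Lemma ferrers_down a b a' b' :
  (a, b) \in F -> (0 < a' <= a)%N -> (0 < b' <= b)%N -> (a', b') \in F.
Proof. by move=> ab /(ferrers_left ab) a'b; apply: ferrers_below. Qed.

Definition fcol c : {set F} := [set w : F | (val w).1 == c].
Definition frow r : {set F} := [set w : F | (val w).2 == r].

Lemma fcol_clique c : clique (fcol c).
Proof.
by move=> u w; rewrite !inE => /eqP uc /eqP wc uw; rewrite /rook_adj uw uc wc eqxx.
Qed.

Lemma frow_clique r : clique (frow r).
Proof.
by move=> u w; rewrite !inE => /eqP ur /eqP wr uw; rewrite /rook_adj uw ur wr eqxx orbT.
Qed.

Lemma card_fsep (P : pred (nat * nat)) :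
  #|` [fset p in F | P p]| = #|[set w : F | P (val w)]|.
Proof.
rewrite -(@card_fsub _ F); last by apply/fsubsetP => p; rewrite !inE => /andP[].
by apply: eq_card => w; rewrite !inE fsvalP.
Qed.

Lemma cut_columns_sum_ge x y T E g m c0 c :
  (x, y) \in F -> (forall w, 0 <= T w) -> (forall w, 0 <= E w) ->
  (forall w, E w = T w - lap g w) -> (forall u, g u <= m) ->
  (0 < c0 <= x)%N -> {in fcol c0, forall w, g w = m} ->
  (0 < c <= x)%N -> {in fcol c, forall w, g w < m} ->
  #|` Uset F y|%:Z - y%:Z <= \sum_w T w.
Proof.
move=> xy_in T_ge0 E_ge0 E_T g_le c0_range col_c0 c_range col_c.
rewrite /Uset card_fsep.
apply: (sum_coord_lines_ge (k := fun w => (val w).2)) => // [w|r r_range].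
  by case: (ferrers_coord_gt0 w).
apply: (clique_cut (@frow_clique r) T_ge0 E_ge0 E_T g_le).
  have c0r := ferrers_down xy_in c0_range r_range.
  by exists [` c0r]; rewrite ?inE //; apply: col_c0; rewrite inE.
have cr := ferrers_down xy_in c_range r_range.
by exists [` cr]; rewrite ?inE //; apply: col_c; rewrite inE.
Qed.

End Ferrers.

Section LinearSystem.
Variables (F : {fset (nat * nat)}) (x y : nat) (D : F -> int).
Hypotheses (F_ferrers : ferrers F) (xy_in : (x, y) \in F) (D_ge0 : forall w, 0 <= D w).
Hypothesis degD_lt_L : \sum_w D w < #|` Lset F x|%:Z - x%:Z.
Hypothesis degD_lt_U : \sum_w D w < #|` Uset F y|%:Z - y%:Z.
Implicit Types (T E f g : F -> int).

Definition in_linsys T := (forall w, 0 <= T w) /\ exists g, forall w, T w = D w - lap g w.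

Lemma in_linsys_D : in_linsys D.
Proof. by split=> //; exists (fun=> 0) => w; rewrite lap_cst subr0. Qed.

Lemma linsys_sum T : in_linsys T -> \sum_w T w = \sum_w D w.
Proof. by move=> [_ [g T_D]]; under eq_bigr do rewrite T_D; rewrite sumrB sum_lap subr0. Qed.

Lemma light_col_exists T : in_linsys T -> exists2 c, (0 < c <= x)%N & light T (fcol F c).
Proof.
move=> T_linsys; have [T_ge0 _] := T_linsys.
have [/hasP[c]|/hasPn heavy] := boolP (has (fun c => light T (fcol F c)) (index_iota 1 x.+1)).
  by rewrite mem_index_iota; exists c.
suff: #|` Lset F x|%:Z - x%:Z <= \sum_w D w by rewrite leNgt degD_lt_L.
rewrite -(linsys_sum T_linsys) /Lset card_fsep.
apply: (sum_coord_lines_ge (k := fun w => (val w).1)) => [w|//|c c_range].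
  by case: (ferrers_coord_gt0 F_ferrers w).
by apply: heavy; rewrite mem_index_iota.
Qed.

Definition reaches T E := exists g, (forall w, E w = T w - lap g w) /\
  forall c, (0 < c <= x)%N -> light T (fcol F c) ->
    {in fcol F c, forall w u, g u <= g w}.

Lemma reaches_le T E c w :
  reaches T E -> (0 < c <= x)%N -> light T (fcol F c) -> w \in fcol F c -> E w <= T w.
Proof.
move=> [g [E_T g_max]] c_range c_light wc.
by rewrite E_T lerBlDl lerDr; apply: lap_ge0; apply: (g_max c c_range c_light w wc).
Qed.

Lemma reaches_trans T E E' : reaches T E -> reaches E E' -> reaches T E'.
Proof.
move=> TE [g2 [E'_E g2_max]]; have [g1 [E_T g1_max]] := TE.
exists (fun u => g1 u + g2 u); split=> [w|c c_range c_light w wc u].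
  by rewrite lapD E'_E E_T opprD addrA.
have E_light : light E (fcol F c).
  apply: (le_lt_trans _ c_light); apply: ler_sum => v.
  exact: reaches_le TE c_range c_light.
by apply: lerD; [apply: (g1_max c) | apply: (g2_max c)].
Qed.

Lemma col_max_min f : exists tau c0,
  [/\ (0 < c0 <= x)%N, {in fcol F c0, forall w, tau <= f w} &
      forall c, (0 < c <= x)%N -> exists2 w, w \in fcol F c & f w <= tau].
Proof.
have [/= x_gt0 y_gt0 _ _] := F_ferrers xy_in.
pose col_min w := (0 < (val w).1 <= x)%N &&
  [forall u, ((val u).1 == (val w).1) ==> (f w <= f u)].
have col_minP c : (0 < c <= x)%N -> exists2 w, w \in fcol F c & col_min w.
  move=> c_range; have c1 : (c, 1%N) \in F.
    by apply: (ferrers_down F_ferrers xy_in c_range); rewrite y_gt0.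
  have [w /eqP wc w_min] := @arg_minP _ _ _ [` c1] (fun u : F => (val u).1 == c) f (eqxx _).
  exists w; first by rewrite inE wc.
  rewrite /col_min wc c_range /=.
  by apply/forallP => u; apply/implyP => /eqP uc; apply: w_min; rewrite uc.
have [w1 _ w1_min] := col_minP 1%N x_gt0.
case: (arg_maxP f w1_min) => ws /andP[ws_range /forallP ws_min] ws_max.
exists (f ws), (val ws).1; split=> // [w|c c_range].
  by rewrite inE => wc; apply: (implyP (ws_min w)).
by have [w wc w_min] := col_minP c c_range; exists w => //; apply: ws_max.
Qed.

Section Meet.
Variables (T0 E f : F -> int) (tau : int) (c0 : nat).
Hypotheses (T0_linsys : in_linsys T0) (E_ge0 : forall w, 0 <= E w).
Hypothesis E_T0 : forall w, E w = T0 w - lap f w.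
Hypotheses (c0_range : (0 < c0 <= x)%N) (col_c0 : {in fcol F c0, forall w, tau <= f w}).
Hypothesis cols_low : forall c, (0 < c <= x)%N -> exists2 w, w \in fcol F c & f w <= tau.

Let fhi u := Num.max (f u) tau.
Let flo u := Num.min (f u) tau.
Let T w := T0 w - lap fhi w.

Let T_ge0 w : 0 <= T w.
Proof.
have [T0_ge0 _] := T0_linsys; rewrite subr_ge0.
have := lap_max_le f tau w; rewrite le_max => /orP[] /le_trans; apply; first exact: T0_ge0.
by rewrite -subr_ge0 -E_T0.
Qed.

Let T0_T w : T0 w = T w - lap (fun u => - fhi u) w.
Proof. by rewrite lapN opprK subrK. Qed.

Let E_T w : E w = T w - lap flo w.
Proof.
rewrite E_T0 /T -addrA -opprD -lapD.
rewrite (@eq_lap _ (fun u => fhi u + flo u) (fun u => f u + tau)) => [|u].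
  by rewrite lapD lap_cst addr0.
exact: addr_max_min.
Qed.

Lemma meet_in_linsys : in_linsys T.
Proof.
have [_ [g0 T0_D]] := T0_linsys; split=> //; exists (fun u => g0 u + fhi u) => w.
by rewrite /T T0_D lapD opprD addrA.
Qed.

Let flo_le u : flo u <= tau.
Proof. by rewrite ge_min lexx orbT. Qed.

Let light_col_le c :
  (0 < c <= x)%N -> light T (fcol F c) -> {in fcol F c, forall w, f w <= tau}.
Proof.
move=> c_range c_light w wc; have [T0_ge0 _] := T0_linsys.
have [w0 w0c fw0] := cols_low c_range.
have fhi_le u : - fhi u <= - tau by rewrite lerN2 le_max lexx orbT.
have fhi_w0 : - fhi w0 = - tau by rewrite /fhi (max_idPr fw0).
have := light_clique_max (@fcol_clique F c) T_ge0 T0_ge0 T0_T fhi_le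
  (ex_intro2 _ _ w0 w0c fhi_w0) c_light wc.
by move/oppr_inj/max_idPr.
Qed.

Lemma meet_light_col c :
  (0 < c <= x)%N -> light T (fcol F c) -> {in fcol F c, forall w, f w = tau}.
Proof.
move=> c_range c_light.
have [/existsP[w0 /andP[w0c fw0]]|/existsPn col_lt] :=
  boolP [exists w in fcol F c, tau <= f w].
  have flo_w0 : flo w0 = tau by rewrite /flo (min_idPr fw0).
  move=> w wc; apply/le_anti; rewrite (light_col_le c_range c_light wc) /=.
  have := light_clique_max (@fcol_clique F c) T_ge0 E_ge0 E_T flo_le
    (ex_intro2 _ _ w0 w0c flo_w0) c_light wc.
  by move/min_idPr.
have flo_c0 : {in fcol F c0, forall w, flo w = tau} by move=> w /col_c0 /min_idPr.
have flo_c : {in fcol F c, forall w, flo w < tau}.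
  move=> w wc; have := col_lt w; rewrite wc /= -ltNge => fw.
  by rewrite /flo (min_idPl (ltW fw)).
have := cut_columns_sum_ge F_ferrers xy_in T_ge0 E_ge0 E_T flo_le c0_range flo_c0 c_range
  flo_c.
by rewrite (linsys_sum meet_in_linsys) leNgt degD_lt_U.
Qed.

Lemma meet_reaches_T0 : reaches T T0.
Proof.
exists (fun u => - fhi u); split=> // c c_range c_light w wc u.
by rewrite lerN2 /fhi (meet_light_col c_range c_light wc) maxxx le_max lexx orbT.
Qed.

Lemma meet_reaches_E : reaches T E.
Proof.
exists flo; split=> // c c_range c_light w wc u.
by rewrite /flo (meet_light_col c_range c_light wc) minxx ge_min lexx orbT.
Qed.

End Meet.

Lemma linsys_meet T0 E :
  in_linsys T0 -> in_linsys E -> exists T, [/\ in_linsys T, reaches T T0 & reaches T E].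
Proof.
move=> T0_linsys [E_ge0 [g1 E_D]]; have [_ [g0 T0_D]] := T0_linsys.
pose f u := g1 u - g0 u.
have E_T0 w : E w = T0 w - lap f w.
  rewrite E_D T0_D (@eq_lap _ g1 (fun u => g0 u + f u)) => [|u].
    by rewrite lapD opprD addrA.
  by rewrite /f addrC subrK.
have [tau [c0 [c0_range col_c0 cols_low]]] := col_max_min f.
eexists; split.
- exact: meet_in_linsys T0_linsys E_ge0 E_T0.
- exact: meet_reaches_T0 T0_linsys E_ge0 E_T0 c0_range col_c0 cols_low.
- exact: meet_reaches_E T0_linsys E_ge0 E_T0 c0_range col_c0 cols_low.
Qed.

Lemma linsys_common_source (s : seq F) :
  (forall v, exists2 E, in_linsys E & 0 < E v) ->
  exists2 T, in_linsys T &
    {in s, forall v, exists E, [/\ in_linsys E, 0 < E v & reaches T E]}.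
Proof.
move=> pos_rank; elim: s => [|v s [T T_linsys reach_s]].
  by exists D => //; apply: in_linsys_D.
have [E E_linsys Ev_gt0] := pos_rank v.
have [T' [T'_linsys T'T T'E]] := linsys_meet T_linsys E_linsys.
exists T' => // u; rewrite inE => /predU1P[->|us]; first by exists E.
have [E' [E'_linsys E'u_gt0 TE']] := reach_s u us.
by exists E'; split=> //; apply: reaches_trans T'T TE'.
Qed.

Lemma linsys_not_positive_rank : ~ (forall v, exists2 E, in_linsys E & 0 < E v).
Proof.
move=> pos_rank; have [T T_linsys reach] := linsys_common_source (enum [set: F]) pos_rank.
have [c c_range c_light] := light_col_exists T_linsys.
have [w wc Tw0] := light_zero (proj1 T_linsys) c_light.
have [E [_ Ew_gt0 TE]] := reach w (etrans (mem_enum _ w) (in_setT w)).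
by have := reaches_le TE c_range c_light wc; rewrite Tw0 leNgt Ew_gt0.
Qed.

End LinearSystem.

Theorem theorem3p4 (F : {fset (nat * nat)}) (x y : nat) (D : divisor F) :
  ferrers F -> (x, y) \in F -> effective D ->
  (ddeg D < Num.min (#|` Uset F y|%:Z - y%:Z) (#|` Lset F x|%:Z - x%:Z))%R ->
  ~ positive_rank D.
Proof.
move=> F_ferrers xy_in D_ge0; rewrite lt_min => /andP[degD_lt_U degD_lt_L] pos_rank.
apply: (linsys_not_positive_rank F_ferrers xy_in D_ge0 degD_lt_L degD_lt_U) => v.
have [D' [D_D' D'_ge0 D'v_gt0]] := pos_rank v.
by exists D' => //; split=> //; apply: div_equiv_lap.
Qed.
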